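(* Let $b\in\mathbb N$ with $b\ge2d$, $\epsilon>0$, and let $g:(0,\infty)\to(0,\infty)$ be decreasing to zero. Fix an environment $\boldsymbol w$ such that for all $n$ large enough: (1) for all $z\in B_{n+b}$ the edge set $\mathfrak E(B_b(z))$ contains at most $3d-1$ edges with conductance $\le g(n^{1-\epsilon})$; and (2) the graph of edges with conductance $>g(n^{1-\epsilon})$ has a unique infinite connected component $\mathscr D_n$. Then for $n$ large enough the set $\mathscr I_n=B_n\setminus\mathscr D_n$ is $b$-sparse.
   Context: Lattice $\mathbb Z^d$, $d\ge2$, with nearest-neighbour edges $\mathfrak E_d$ and positive conductances $(w_e)_{e\in\mathfrak E_d}$. $B_n=[-n,n]^d\cap\mathbb Z^d$ and $B_m(z)=\{x\in\mathbb Z^d:|x-z|_\infty\le m\}$. $\mathfrak E(A)=\{\{x,x+\boldsymbol e_j\}: x\in A,\ j\in\{1,\dots,d\}\}$. An edge is called open at level $n$ if its conductance exceeds $g(n^{1-\epsilon})$; $\mathscr D_n$ is the infinite open cluster (sites) of this environment. A set $\mathscr I\subset\mathbb Z^d$ is $b$-sparse if every box $B_b(z)$, $z\in\mathbb Z^d$, contains at most one site of $\mathscr I$. *)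

From Stdlib Require Import Reals Lra Lia ZArith List Relations.
Open Scope R_scope.

(* Sites of Z^d are functions nat -> Z vanishing at coordinates >= d. *)
Definition site (d : nat) (x : nat -> Z) : Prop :=
  forall i : nat, (d <= i)%nat -> x i = 0%Z.

Definition shift (x : nat -> Z) (j : nat) : nat -> Z :=
  fun i => if Nat.eqb i j then (x i + 1)%Z else x i.

Definition inbox (d : nat) (m : nat) (z x : nat -> Z) : Prop :=
  site d x /\ forall i : nat, (i < d)%nat -> (Z.abs (x i - z i) <= Z.of_nat m)%Z.

Definition origin : nat -> Z := fun _ => 0%Z.

(* Conductances: w x j is the conductance of the edge {x, x + e_j}, j < d.
   Every nearest-neighbour edge of Z^d is uniquely of this form. *)
Definition Env := (nat -> Z) -> nat -> R.

Definition thr (g : R -> R) (eps : R) (n : nat) : R :=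
  g (Rpower (INR n) (1 - eps)).

Definition open_edge (w : Env) (g : R -> R) (eps : R) (n : nat)
  (x : nat -> Z) (j : nat) : Prop := w x j > thr g eps n.

Definition open_adj (d : nat) (w : Env) (g : R -> R) (eps : R) (n : nat)
  (x y : nat -> Z) : Prop :=
  site d x /\ site d y /\
  exists j : nat, (j < d)%nat /\
    ((y = shift x j /\ open_edge w g eps n x j) \/
     (x = shift y j /\ open_edge w g eps n y j)).

Definition conn (d : nat) (w : Env) (g : R -> R) (eps : R) (n : nat)
  (x y : nat -> Z) : Prop :=
  site d x /\ clos_refl_trans (nat -> Z) (open_adj d w g eps n) x y.

Definition infinite_set (S : (nat -> Z) -> Prop) : Prop :=
  forall l : list (nat -> Z), exists y, S y /\ ~ In y l.

Definition inf_cluster (d : nat) (w : Env) (g : R -> R) (eps : R) (n : nat)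
  (x : nat -> Z) : Prop :=
  infinite_set (conn d w g eps n x).

Definition unique_inf_cluster (d : nat) (w : Env) (g : R -> R) (eps : R)
  (n : nat) : Prop :=
  exists x0, inf_cluster d w g eps n x0 /\
    forall x1, inf_cluster d w g eps n x1 -> conn d w g eps n x0 x1.

Definition few_closed (d b : nat) (w : Env) (g : R -> R) (eps : R) (n : nat)
  (z : nat -> Z) : Prop :=
  forall l : list ((nat -> Z) * nat),
    NoDup l ->
    (forall e, In e l ->
       inbox d b z (fst e) /\ (snd e < d)%nat /\ w (fst e) (snd e) <= thr g eps n) ->
    (length l <= 3 * d - 1)%nat.

Definition sparse (d b : nat) (I : (nat -> Z) -> Prop) : Prop :=
  forall z x y, site d z -> I x -> I y -> inbox d b z x -> inbox d b z y -> x = y.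

(* A site is isolated when its 2d incident edges are closed.  Two distinct isolated sites
   of a box B_b(z), together with one further closed edge per direction, give 3d closed
   edges in a box of radius b, so the isolated sites of B_n are b-sparse; it remains to show
   that every non-isolated site of B_n lies in the infinite cluster.

   In a box with at most 3d - 1 closed edges, among any 3d consecutive slices orthogonal to
   a direction one has all its edges open.  Open slices of a box in two directions cross,
   open slices of boxes with adjacent centres meet, so all open slices of the boxes centred
   in B_(n+b) lie in one open cluster.  A non-isolated site x reaches an open slice of its
   own box: otherwise every slice through a site reachable from x carries a closed edge,
   and following the segments through x and through an open neighbour of x yields 3d
   closed edges in B_b(x).  Finally the infinite cluster contains a non-isolated site of
   the region: for eps <= 1 the open graph grows with n and a site of the infinite
   cluster at an early level works; for eps > 1 it shrinks, and one argues at a level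
   n' >= n large enough for B_(n') to contain the given site of the infinite cluster. *)

From Pilot Require Import Defs.
From Stdlib Require Import Reals Lra Lia ZArith List Relations.
From Stdlib Require Import Classical FunctionalExtensionality.
Import Defs.
Open Scope Z_scope.

Definition upd (p : nat -> Z) (k : nat) (c : Z) : nat -> Z :=
  fun i => if Nat.eqb i k then c else p i.

Lemma upd_eq (p : nat -> Z) (k : nat) (c : Z) : upd p k c k = c.
Proof. unfold upd; rewrite Nat.eqb_refl; reflexivity. Qed.

Lemma upd_neq (p : nat -> Z) (k : nat) (c : Z) (i : nat) : i <> k -> upd p k c i = p i.
Proof. intro H; unfold upd; destruct (Nat.eqb_spec i k); tauto. Qed.

Lemma upd_id (p : nat -> Z) (k : nat) : upd p k (p k) = p.
Proof.
  apply functional_extensionality; intro i; unfold upd.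
  destruct (Nat.eqb_spec i k); subst; reflexivity.
Qed.

Lemma upd_upd (p : nat -> Z) (k : nat) (c c' : Z) : upd (upd p k c) k c' = upd p k c'.
Proof.
  apply functional_extensionality; intro i; unfold upd.
  destruct (Nat.eqb_spec i k); reflexivity.
Qed.

Lemma shift_upd (p : nat -> Z) (k : nat) : shift p k = upd p k (p k + 1).
Proof.
  apply functional_extensionality; intro i; unfold shift, upd.
  destruct (Nat.eqb_spec i k); subst; reflexivity.
Qed.

Lemma shift_upd_pred (p : nat -> Z) (k : nat) : shift (upd p k (p k - 1)) k = p.
Proof. rewrite shift_upd, upd_upd, upd_eq, Z.sub_add; apply upd_id. Qed.

Lemma site_upd (d : nat) (p : nat -> Z) (k : nat) (c : Z) :
  site d p -> (k < d)%nat -> site d (upd p k c).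
Proof. intros Hp Hk i Hi; rewrite upd_neq by lia; auto. Qed.

Lemma site_ext (d : nat) (p q : nat -> Z) :
  site d p -> site d q -> (forall i, (i < d)%nat -> p i = q i) -> p = q.
Proof.
  intros Hp Hq H; apply functional_extensionality; intro i.
  destruct (Nat.lt_ge_cases i d); [auto | now rewrite Hp, Hq].
Qed.

Lemma site_bounded (d : nat) (x : nat -> Z) :
  site d x -> exists R : nat, forall i, Z.abs (x i) <= Z.of_nat R.
Proof.
  intro Hx.
  assert (H : forall n, exists R : nat, forall i, (i < n)%nat -> Z.abs (x i) <= Z.of_nat R).
  { induction n as [|n [R HR]]; [exists 0%nat; lia|].
    exists (R + Z.abs_nat (x n))%nat; intros i Hi.
    destruct (Nat.eq_dec i n) as [->|]; [lia|]. specialize (HR i ltac:(lia)); lia. }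
  destruct (H d) as [R HR]; exists R; intro i.
  destruct (Nat.lt_ge_cases i d); [auto | rewrite Hx by auto; lia].
Qed.

Lemma inbox_center (d b : nat) (z : nat -> Z) : site d z -> inbox d b z z.
Proof. intro Hz; split; [exact Hz | intros; rewrite Z.sub_diag; lia]. Qed.

Lemma inbox_widen (d m m' : nat) (z x : nat -> Z) :
  inbox d m z x -> (m <= m')%nat -> inbox d m' z x.
Proof. intros [Hx H] Hm; split; [exact Hx | intros i Hi; specialize (H i Hi); lia]. Qed.

Lemma inbox_upd (d b : nat) (z x : nat -> Z) (k : nat) (c : Z) :
  inbox d b z x -> (k < d)%nat -> Z.abs (c - z k) <= Z.of_nat b -> inbox d b z (upd x k c).
Proof.
  intros [Hx H] Hk Hc; split; [now apply site_upd|].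
  intros i Hi; destruct (Nat.eq_dec i k) as [->|]; [now rewrite upd_eq | rewrite upd_neq; auto].
Qed.

Lemma inbox_origin_of_bound (d R n : nat) (x : nat -> Z) :
  site d x -> (forall i, Z.abs (x i) <= Z.of_nat R) -> (R <= n)%nat -> inbox d n origin x.
Proof. intros Hx H Hn; split; [exact Hx | intros i _; specialize (H i); unfold origin; lia]. Qed.

Definition in_rect (d : nat) (lo hi p : nat -> Z) : Prop :=
  site d p /\ forall i, (i < d)%nat -> (lo i <= p i <= hi i).

Fixpoint l1_dist (n : nat) (p q : nat -> Z) : nat :=
  match n with
  | O => O
  | S n => (l1_dist n p q + Z.abs_nat (p n - q n))%nat
  end.

Lemma l1_dist_upd (n : nat) (p q : nat -> Z) (i : nat) (c : Z) : (i < n)%nat ->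
  (l1_dist n (upd p i c) q + Z.abs_nat (p i - q i) =
   l1_dist n p q + Z.abs_nat (c - q i))%nat.
Proof.
  induction n as [|n IH]; intro Hi; simpl; [lia|].
  destruct (Nat.eq_dec i n) as [->|Hin].
  - rewrite upd_eq.
    assert (E : l1_dist n (upd p n c) q = l1_dist n p q).
    { clear IH Hi; enough (forall m, (m <= n)%nat -> l1_dist m (upd p n c) q = l1_dist m p q)
        by auto.
      induction m as [|m IHm]; intro Hm; simpl; [reflexivity|].
      rewrite IHm, upd_neq by lia; reflexivity. }
    lia.
  - rewrite upd_neq by auto. specialize (IH ltac:(lia)); lia.
Qed.

Lemma l1_dist_eq0 (n : nat) (p q : nat -> Z) :
  l1_dist n p q = 0%nat <-> forall i, (i < n)%nat -> p i = q i.
Proof.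
  induction n as [|n IH]; simpl; [split; [lia | reflexivity]|].
  split.
  - intros H i Hi. destruct (Nat.eq_dec i n) as [->|]; [lia | apply IH; lia].
  - intro H. rewrite (proj2 IH) by (intros; apply H; lia). rewrite (H n) by lia; lia.
Qed.

(* Induction on the l1 distance to the target: a unit step towards it stays in the
   rectangle. *)
Lemma rect_rel_total (d : nat) (lo hi : nat -> Z) (R : (nat -> Z) -> (nat -> Z) -> Prop) :
  (forall p, in_rect d lo hi p -> R p p) ->
  (forall p q, in_rect d lo hi p -> in_rect d lo hi q -> R p q -> R q p) ->
  (forall p q r, in_rect d lo hi p -> in_rect d lo hi q -> in_rect d lo hi r ->
     R p q -> R q r -> R p r) ->
  (forall p k, (k < d)%nat -> in_rect d lo hi p -> in_rect d lo hi (shift p k) ->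
     R p (shift p k)) ->
  forall p q, in_rect d lo hi p -> in_rect d lo hi q -> R p q.
Proof.
  intros Hrefl Hsym Htrans Hstep p q Hp Hq.
  remember (l1_dist d p q) as m eqn:Hm; revert p Hp Hm.
  induction m as [|m IH]; intros p Hp Hm.
  - replace p with q; [now apply Hrefl|].
    apply site_ext with d; [apply Hq | apply Hp|].
    intros i Hi; symmetry; now apply (proj1 (l1_dist_eq0 d p q)).
  - assert (Hdiff : exists i, (i < d)%nat /\ p i <> q i).
    { apply NNPP; intro Hno. enough (l1_dist d p q = 0%nat) by lia.
      apply l1_dist_eq0; intros i Hi; apply NNPP; eauto. }
    destruct Hdiff as [i [Hi Hne]].
    pose proof (proj2 Hp i Hi); pose proof (proj2 Hq i Hi).
    set (c := if (p i <? q i) then (p i + 1) else (p i - 1)).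
    assert (Hcb : (lo i <= c <= hi i) /\ (Z.abs_nat (c - q i) + 1 = Z.abs_nat (p i - q i))%nat)
      by (unfold c; destruct (Z.ltb_spec (p i) (q i)); lia).
    assert (Hp' : in_rect d lo hi (upd p i c)).
    { split; [apply site_upd; [apply Hp | exact Hi]|]. intros k Hk.
      destruct (Nat.eq_dec k i) as [->|]; [rewrite upd_eq; lia | rewrite upd_neq; auto].
      now apply Hp. }
    apply Htrans with (upd p i c); auto.
    + unfold c in *; destruct (Z.ltb_spec (p i) (q i)).
      * rewrite <- shift_upd in *; auto.
      * apply Hsym; auto.
        generalize (shift_upd_pred p i); set (p' := upd p i (p i - 1)); intro E.
        rewrite <- E; apply Hstep; auto. now rewrite E.
    + apply IH; auto. pose proof (l1_dist_upd d p q i c Hi); lia.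
Qed.

Lemma NoDup_witnesses {A B : Type} (P : A -> B -> Prop) (l : list A) :
  NoDup l -> (forall a, In a l -> exists e, P a e) ->
  (forall a a' e, In a l -> In a' l -> P a e -> P a' e -> a = a') ->
  exists le, NoDup le /\ length le = length l /\
    forall e, In e le -> exists a, In a l /\ P a e.
Proof.
  induction l as [|a l IH]; intros Hl Hex Hinj.
  - exists nil; repeat split; [constructor | now intros e []].
  - inversion Hl as [|? ? Ha Hl']; subst.
    destruct IH as [le [Hle [Hlen Hin]]]; auto.
    { intros; apply Hex; now right. }
    { intros; eapply Hinj; try right; eauto. }
    destruct (Hex a (or_introl eq_refl)) as [e He].
    exists (e :: le); repeat split; simpl; auto.
    + constructor; auto. intro He'. destruct (Hin e He') as [a' [Ha' Pa']].
      apply Ha. replace a with a'; auto. eapply Hinj; simpl; eauto.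
    + intros e' [<-|He']; [eauto|]. destruct (Hin e' He') as [a' [? ?]]; eauto.
Qed.

Lemma NoDup_list_prod {A B : Type} (l : list A) (l' : list B) :
  NoDup l -> NoDup l' -> NoDup (list_prod l l').
Proof.
  induction l as [|a l IH]; intros Hl Hl'; simpl; [constructor|].
  inversion Hl; subst. apply NoDup_app; auto.
  - apply NoDup_map_NoDup_ForallPairs; auto. intros x y _ _ E; now inversion E.
  - intros [a' b'] Hin Hin'. apply in_map_iff in Hin as [y [E _]]. inversion E; subst.
    apply in_prod_iff in Hin'; tauto.
Qed.

Lemma inbox_in_rect (d b : nat) (z r : nat -> Z) :
  inbox d b z r <-> in_rect d (fun i => z i - Z.of_nat b) (fun i => z i + Z.of_nat b) r.
Proof.
  split; intros [Hr H]; split; auto; intros i Hi; specialize (H i Hi); lia.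
Qed.

Section OpenGraph.
Variable d : nat.
Variable op : (nat -> Z) -> nat -> Prop.

(* Same shape as [open_adj], so that [op_conn] with [op := open_edge w g eps n] is
   convertible to the relation used in [conn]. *)
Definition op_adj (x y : nat -> Z) : Prop :=
  site d x /\ site d y /\ exists j : nat, (j < d)%nat /\
    ((y = shift x j /\ op x j) \/ (x = shift y j /\ op y j)).

Definition op_conn : (nat -> Z) -> (nat -> Z) -> Prop := clos_refl_trans (nat -> Z) op_adj.

Lemma op_conn_sym x y : op_conn x y -> op_conn y x.
Proof.
  induction 1 as [x y [Hx [Hy [j [Hj H]]]]| |]; [|apply rt_refl | eapply rt_trans; eauto].
  apply rt_step; repeat split; auto; exists j; tauto.
Qed.

Lemma op_conn_shift x k : site d x -> (k < d)%nat -> op x k -> op_conn x (shift x k).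
Proof.
  intros Hx Hk Hop; apply rt_step; repeat split; auto.
  - rewrite shift_upd; now apply site_upd.
  - exists k; auto.
Qed.

Lemma op_conn_rect lo hi :
  (forall p k, (k < d)%nat -> in_rect d lo hi p -> in_rect d lo hi (shift p k) -> op p k) ->
  forall p q, in_rect d lo hi p -> in_rect d lo hi q -> op_conn p q.
Proof.
  intro Hopen; apply rect_rel_total.
  - intros; apply rt_refl.
  - intros; now apply op_conn_sym.
  - intros; eapply rt_trans; eauto.
  - intros p k Hk Hp Hp'; apply op_conn_shift; auto; apply Hp.
Qed.

Lemma op_conn_segment p k lo hi : site d p -> (k < d)%nat ->
  (forall c, lo <= c < hi -> op (upd p k c) k) ->
  forall c c', lo <= c <= hi -> lo <= c' <= hi -> op_conn (upd p k c) (upd p k c').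
Proof.
  intros Hp Hk Hopen.
  assert (Hseg : forall r, in_rect d (upd p k lo) (upd p k hi) r -> r = upd p k (r k)).
  { intros r [Hr Hb]; apply site_ext with d; auto; [now apply site_upd|].
    intros i Hi; specialize (Hb i Hi).
    destruct (Nat.eq_dec i k) as [->|]; [now rewrite upd_eq | rewrite !upd_neq in *; auto; lia]. }
  assert (Hin : forall c, lo <= c <= hi -> in_rect d (upd p k lo) (upd p k hi) (upd p k c)).
  { intros c Hc; split; [now apply site_upd|]. intros i Hi.
    destruct (Nat.eq_dec i k) as [->|]; [rewrite !upd_eq; lia | rewrite !upd_neq; auto; lia]. }
  intros c c' Hc Hc'; apply op_conn_rect with (upd p k lo) (upd p k hi); auto.
  intros r k' Hk' Hr Hr'.
  assert (Hkk : k' = k).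
  { apply NNPP; intro Hne. pose proof (proj2 Hr' k' Hk'); pose proof (proj2 Hr k' Hk').
    unfold shift in *; rewrite Nat.eqb_refl, !upd_neq in * by auto; lia. }
  subst k'. pose proof (proj2 Hr' k Hk) as Hb. unfold shift in Hb.
  rewrite Nat.eqb_refl, !upd_eq in Hb. rewrite (Hseg r Hr) in *. rewrite upd_eq in *.
  apply Hopen; pose proof (proj2 Hr k Hk); rewrite !upd_eq in *; lia.
Qed.

Definition isolated (x : nat -> Z) : Prop :=
  forall k, (k < d)%nat -> ~ op x k /\ ~ op (upd x k (x k - 1)) k.

Lemma isolated_conn x y : isolated x -> op_conn x y -> y = x.
Proof.
  intros Hiso Hxy; apply clos_rt_rt1n in Hxy.
  destruct Hxy as [|y z [_ [_ [j [Hj [[-> Hop]|[-> Hop]]]]]] _]; [reflexivity| |];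
    exfalso; destruct (Hiso j Hj) as [Hup Hdown]; [exact (Hup Hop)|].
  rewrite shift_upd, upd_eq, upd_upd, Z.add_simpl_r, upd_id in Hdown; exact (Hdown Hop).
Qed.

Lemma exists_open_neighbour x : site d x -> ~ isolated x ->
  exists j sg, (j < d)%nat /\ (sg = 1 \/ sg = -1) /\ op_conn x (upd x j (x j + sg)).
Proof.
  intros Hx Hiso.
  assert (Hj : exists j, (j < d)%nat /\ (op x j \/ op (upd x j (x j - 1)) j)).
  { apply NNPP; intro Hno; apply Hiso; intros j Hj; split; intro Hop; apply Hno; eauto. }
  destruct Hj as [j [Hj [Hop|Hop]]].
  - exists j, 1; repeat split; auto. rewrite <- shift_upd; now apply op_conn_shift.
  - exists j, (-1); repeat split; auto. apply op_conn_sym.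
    replace (x j + -1) with (x j - 1) by lia.
    generalize (shift_upd_pred x j); set (x' := upd x j (x j - 1)); intro E.
    rewrite <- E; apply op_conn_shift; auto; now apply site_upd.
Qed.

Section Boxes.
Variable b : nat.
Hypothesis hd : (2 <= d)%nat.
Hypothesis hb : (2 * d <= b)%nat.

Definition closed_in (z : nat -> Z) (e : (nat -> Z) * nat) : Prop :=
  inbox d b z (fst e) /\ (snd e < d)%nat /\ ~ op (fst e) (snd e).

Definition few_closed_box (z : nat -> Z) : Prop :=
  forall l, NoDup l -> (forall e, In e l -> closed_in z e) -> (length l <= 3 * d - 1)%nat.

Lemma few_closed_box_count {A : Type} z (l : list A) (P : A -> (nat -> Z) * nat -> Prop) :
  few_closed_box z -> NoDup l -> (forall a, In a l -> exists e, P a e) ->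
  (forall a a' e, In a l -> In a' l -> P a e -> P a' e -> a = a') ->
  (forall a e, In a l -> P a e -> closed_in z e) -> (length l <= 3 * d - 1)%nat.
Proof.
  intros Hfew Hl Hex Hinj Hcl.
  destruct (NoDup_witnesses P l Hl Hex Hinj) as [le [Hle [<- Hin]]].
  apply Hfew; auto. intros e He; destruct (Hin e He) as [a [Ha Pa]]; eauto.
Qed.

Definition open_slice (z : nat -> Z) (k : nat) (c : Z) : Prop :=
  forall q k', (k' < d)%nat -> k' <> k -> inbox d b z q -> inbox d b z (shift q k') ->
    q k = c -> op q k'.

Lemma not_open_slice z k c : ~ open_slice z k c ->
  exists e, closed_in z e /\ snd e <> k /\ fst e k = c.
Proof.
  intro H; apply NNPP; intro Hno; apply H; intros q k' Hk' Hne Hq _ Hqk.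
  apply NNPP; intro Hop; apply Hno; exists (q, k').
  exact (conj (conj Hq (conj Hk' Hop)) (conj Hne Hqk)).
Qed.

Lemma exists_open_slice z k lo : few_closed_box z ->
  exists c, lo <= c < lo + Z.of_nat (3 * d) /\ open_slice z k c.
Proof.
  intro Hfew; apply NNPP; intro Hno.
  enough (length (seq 0 (3 * d)) <= 3 * d - 1)%nat by (rewrite length_seq in *; lia).
  apply (few_closed_box_count z (seq 0 (3 * d))
    (fun t e => closed_in z e /\ snd e <> k /\ fst e k = lo + Z.of_nat t)); auto using seq_NoDup.
  - intros t Ht; apply in_seq in Ht. apply not_open_slice.
    intro Hs; apply Hno; exists (lo + Z.of_nat t); split; auto; lia.
  - intros t t' e _ _ [_ [_ H]] [_ [_ H']]; lia.
  - intros t e _ [H _]; exact H.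
Qed.

Lemma open_slice_conn z k c p q : (k < d)%nat -> open_slice z k c ->
  inbox d b z p -> inbox d b z q -> p k = c -> q k = c -> op_conn p q.
Proof.
  intros Hk Hs Hp Hq Hpk Hqk.
  assert (Hc := proj2 Hp k Hk); rewrite Hpk in Hc.
  set (lo := upd (fun i => z i - Z.of_nat b) k c).
  set (hi := upd (fun i => z i + Z.of_nat b) k c).
  assert (Hrect : forall r, in_rect d lo hi r <-> inbox d b z r /\ r k = c).
  { intro r; rewrite inbox_in_rect; unfold lo, hi; split.
    - intros [Hr Hb]; split; [split; auto|].
      + intros i Hi; specialize (Hb i Hi).
        destruct (Nat.eq_dec i k) as [->|]; [rewrite !upd_eq in Hb | rewrite !upd_neq in Hb];
          auto; lia.
      + specialize (Hb k Hk); rewrite !upd_eq in Hb; lia.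
    - intros [[Hr Hb] Hrk]; split; auto; intros i Hi; specialize (Hb i Hi).
      destruct (Nat.eq_dec i k) as [->|]; [rewrite !upd_eq | rewrite !upd_neq]; auto; lia. }
  apply op_conn_rect with lo hi; try (apply Hrect; auto).
  intros r k' Hk' Hr Hr'; apply Hrect in Hr as [Hr Hrk]; apply Hrect in Hr' as [Hr' Hrk'].
  apply Hs; auto. intros ->; unfold shift in Hrk'; rewrite Nat.eqb_refl in Hrk'; lia.
Qed.

Lemma open_slices_cross_conn z k1 k2 c1 c2 p q : (k1 < d)%nat -> (k2 < d)%nat -> k1 <> k2 ->
  open_slice z k1 c1 -> open_slice z k2 c2 ->
  inbox d b z p -> inbox d b z q -> p k1 = c1 -> q k2 = c2 -> op_conn p q.
Proof.
  intros Hk1 Hk2 Hne Hs1 Hs2 Hp Hq Hpk Hqk.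
  assert (Hr : inbox d b z (upd p k2 (q k2))) by (apply inbox_upd; auto; apply Hq; auto).
  apply rt_trans with (upd p k2 (q k2)).
  - apply (open_slice_conn z k1 c1); auto. now rewrite upd_neq.
  - apply (open_slice_conn z k2 c2); auto. now rewrite upd_eq.
Qed.

Definition frame (z q : nat -> Z) : Prop :=
  inbox d b z q /\ exists k, (k < d)%nat /\ open_slice z k (q k).

Lemma other_direction k : (k < d)%nat -> exists k', (k' < d)%nat /\ k' <> k.
Proof. intro Hk; destruct k; [exists 1%nat | exists 0%nat]; split; lia. Qed.

Lemma frame_conn z p q : few_closed_box z -> frame z p -> frame z q -> op_conn p q.
Proof.
  intros Hfew [Hp [k1 [Hk1 Hs1]]] [Hq [k2 [Hk2 Hs2]]].
  destruct (Nat.eq_dec k1 k2) as [<-|Hne];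
    [|now apply (open_slices_cross_conn z k1 k2 (p k1) (q k2))].
  destruct (other_direction k1 Hk1) as [k3 [Hk3 Hne]].
  destruct (exists_open_slice z k3 (z k3 - Z.of_nat b) Hfew) as [c3 [Hc3 Hs3]].
  assert (Hr : inbox d b z (upd p k3 c3)) by (apply inbox_upd; auto; lia).
  apply rt_trans with (upd p k3 c3).
  - apply (open_slice_conn z k1 (p k1)); auto. now rewrite upd_neq by auto.
  - apply (open_slices_cross_conn z k3 k1 c3 (q k1)); auto. now rewrite upd_eq.
Qed.

Lemma exists_frame z : site d z -> few_closed_box z -> exists q, frame z q.
Proof.
  intros Hz Hfew.
  destruct (exists_open_slice z 0 (z 0%nat - Z.of_nat b) Hfew) as [c [Hc Hs]].
  exists (upd z 0 c); split; [apply inbox_upd; auto using inbox_center; lia|].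
  exists 0%nat; split; [lia | now rewrite upd_eq].
Qed.

Lemma frame_conn_shift z k p q : site d z -> (k < d)%nat ->
  few_closed_box z -> few_closed_box (shift z k) ->
  frame z p -> frame (shift z k) q -> op_conn p q.
Proof.
  intros Hz Hk Hfew Hfew' Hp Hq.
  destruct (other_direction k Hk) as [i [Hi Hne]].
  destruct (exists_open_slice z i (z i - Z.of_nat b) Hfew) as [c [Hc Hs]].
  (* [c'] lies in the [k]-range of both boxes. *)
  destruct (exists_open_slice (shift z k) k (z k - Z.of_nat b + 1) Hfew') as [c' [Hc' Hs']].
  set (r := upd (upd z i c) k c').
  assert (Hr : inbox d b z r)
    by (apply inbox_upd; auto; [apply inbox_upd|]; auto using inbox_center; lia).
  assert (Hr' : inbox d b (shift z k) r).
  { split; [apply Hr|]. intros j Hj; unfold r, shift.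
    destruct (Nat.eq_dec j k) as [->|]; [rewrite Nat.eqb_refl, upd_eq; lia|].
    rewrite upd_neq by auto. destruct (Nat.eqb_spec j k); [tauto|]. apply Hr in Hj.
    unfold r in Hj; rewrite upd_neq in Hj; auto. }
  apply rt_trans with r.
  - apply (frame_conn z); auto. split; auto. exists i; split; auto.
    unfold r; rewrite upd_neq, upd_eq; auto.
  - apply (frame_conn (shift z k)); auto. split; auto. exists k; split; auto.
    unfold r; rewrite upd_eq; auto.
Qed.

Lemma frames_conn (M : nat) z z' p q :
  (forall c, inbox d M origin c -> few_closed_box c) ->
  inbox d M origin z -> inbox d M origin z' -> frame z p -> frame z' q -> op_conn p q.
Proof.
  intros Hfew Hz Hz'; revert p q.
  assert (Hfew_rect : forall c,
    in_rect d (fun i => origin i - Z.of_nat M) (fun i => origin i + Z.of_nat M) c ->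
    site d c /\ few_closed_box c)
    by (intros c Hc; split; [apply Hc | apply Hfew, inbox_in_rect, Hc]).
  apply inbox_in_rect in Hz, Hz'.
  refine (rect_rel_total d _ _ (fun z z' => forall p q, frame z p -> frame z' q -> op_conn p q)
    _ _ _ _ z z' Hz Hz'); clear z z' Hz Hz'.
  - intros z Hz p q; apply frame_conn; apply Hfew_rect, Hz.
  - intros z z' _ _ H p q Hp Hq; apply op_conn_sym; auto.
  - intros z1 z2 z3 _ H2 _ H12 H23 p q Hp Hq.
    destruct (Hfew_rect z2 H2) as [Hz2 Hfew2].
    destruct (exists_frame z2 Hz2 Hfew2) as [r Hr].
    apply rt_trans with r; [apply H12 | apply H23]; auto.
  - intros z k Hk Hz Hz' p q; apply frame_conn_shift; auto; apply Hfew_rect; auto.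
Qed.

Section FrameOfSite.
Variable x : nat -> Z.
Hypothesis hx : site d x.
Hypothesis hfew : few_closed_box x.

(* Lower ends of the edges of the upward ([s = true]) and downward halves of a segment of
   [B_b(x)] in direction [k], split at the site with [k]-th coordinate [x k]. *)
Definition half_lo (s : bool) (k : nat) : Z := if s then x k else x k - Z.of_nat b.
Definition half_hi (s : bool) (k : nat) : Z := if s then x k + Z.of_nat b else x k.

Lemma half_side_eq s s' k c : half_lo s k <= c < half_hi s k ->
  half_lo s' k <= c < half_hi s' k -> s = s'.
Proof. unfold half_lo, half_hi; destruct s, s'; auto; lia. Qed.

Definition half_open (p : nat -> Z) (k : nat) (s : bool) : Prop :=
  forall c, half_lo s k <= c < half_hi s k -> op (upd p k c) k.

Definition half_closed_edge (p : nat -> Z) (k : nat) (s : bool) (e : (nat -> Z) * nat) : Prop :=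
  exists c, half_lo s k <= c < half_hi s k /\ e = (upd p k c, k) /\ ~ op (upd p k c) k.

Lemma exists_half_closed_edge p k s : ~ half_open p k s -> exists e, half_closed_edge p k s e.
Proof.
  intro H; apply NNPP; intro Hno; apply H; intros c Hc; apply NNPP; intro Hop.
  apply Hno; exists (upd p k c, k), c; auto.
Qed.

Lemma half_closed_edge_shape p k s e : half_closed_edge p k s e ->
  snd e = k /\ half_lo s k <= fst e k < half_hi s k /\ forall i, i <> k -> fst e i = p i.
Proof.
  intros [c [Hc [-> _]]]; simpl; rewrite upd_eq.
  split; [reflexivity | split; [exact Hc | intros; now apply upd_neq]].
Qed.

Lemma half_closed_edge_closed p k s e : inbox d b x p -> (k < d)%nat ->
  half_closed_edge p k s e -> closed_in x e.
Proof.
  intros Hp Hk [c [Hc [-> Hop]]]; split; [|split]; auto; simpl.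
  apply inbox_upd; auto; unfold half_lo, half_hi in Hc; destruct s; lia.
Qed.

Lemma half_open_conn p k s c : site d p -> (k < d)%nat -> p k = x k -> half_open p k s ->
  half_lo s k <= c <= half_hi s k -> op_conn p (upd p k c).
Proof.
  intros Hp Hk Hpk Hopen Hc; rewrite <- (upd_id p k) at 1.
  apply op_conn_segment with (half_lo s k) (half_hi s k); auto;
    unfold half_lo, half_hi in *; destruct s; lia.
Qed.

(* The [2 d] half-segments through [x] and the [2 (d - 1)] through [x + sg e_j] in the
   directions [k <> j] carry pairwise distinct closed edges, and [4 d - 2 > 3 d - 1]. *)
Lemma halves_not_all_closed j sg : (j < d)%nat -> (sg = 1 \/ sg = -1) ->
  (forall k s, (k < d)%nat -> ~ half_open x k s) ->
  (forall k s, (k < d)%nat -> k <> j -> ~ half_open (upd x j (x j + sg)) k s) -> False.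
Proof.
  intros Hj Hsg Hx Hx'.
  set (pt := fun w : bool => if w then upd x j (x j + sg) else x).
  set (sides := true :: false :: nil).
  set (others := seq 0 j ++ seq (S j) (d - S j)).
  assert (Hothers : forall k, In k others <-> (k < d)%nat /\ k <> j)
    by (intro k; unfold others; rewrite in_app_iff, !in_seq; lia).
  set (l := list_prod (list_prod (seq 0 d) sides) (false :: nil) ++
            list_prod (list_prod others sides) (true :: nil)).
  assert (Hl : forall k s w, In (k, s, w) l <-> (k < d)%nat /\ (w = true -> k <> j)).
  { intros k s w; unfold l; rewrite in_app_iff, !in_prod_iff, in_seq, Hothers.
    destruct s, w; simpl; intuition (try discriminate; lia). }
  enough (length l <= 3 * d - 1)%nat.
  { unfold l in *; rewrite length_app, !length_prod, length_seq in *.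
    replace (length others) with (d - 1)%nat in *
      by (unfold others; rewrite length_app, !length_seq; lia).
    simpl in *; lia. }
  apply (few_closed_box_count x l (fun '(k, s, w) e => half_closed_edge (pt w) k s e)); auto.
  - assert (Hsides : NoDup sides) by (repeat constructor; simpl; intuition discriminate).
    unfold l; apply NoDup_app.
    + apply NoDup_list_prod;
        [apply NoDup_list_prod; auto using seq_NoDup | repeat constructor; intros []].
    + apply NoDup_list_prod; [apply NoDup_list_prod; auto | repeat constructor; intros []].
      unfold others; apply NoDup_app; auto using seq_NoDup. intros a; rewrite !in_seq; lia.
    + intros [[k s] w] H1 H2; apply in_prod_iff in H1, H2; simpl in *; intuition congruence.
  - intros [[k s] w] Hin; apply Hl in Hin as [Hk Hw]; apply exists_half_closed_edge.
    destruct w; [apply Hx'; auto | apply Hx; auto].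
  - intros [[k s] w] [[k' s'] w'] e Hin Hin' He He'.
    apply Hl in Hin as [Hk Hw]; apply Hl in Hin' as [Hk' Hw'].
    destruct (half_closed_edge_shape _ _ _ _ He) as [Hek [Hc Hi]].
    destruct (half_closed_edge_shape _ _ _ _ He') as [Hek' [Hc' Hi']].
    rewrite Hek in Hek'; subst k'.
    assert (Hss : s = s') by exact (half_side_eq s s' k _ Hc Hc'); subst s'.
    enough (w = w') by congruence.
    apply NNPP; intro Hne.
    assert (Hkj : k <> j)
      by (destruct w, w'; [congruence | apply Hw | apply Hw' | congruence]; auto).
    assert (Ej : pt w j = pt w' j) by (rewrite <- Hi, <- Hi'; auto).
    destruct w, w'; try congruence; unfold pt in Ej; rewrite upd_eq in Ej; lia.
  - intros [[k s] w] e Hin He; apply Hl in Hin as [Hk _].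
    apply (half_closed_edge_closed (pt w) k s); auto.
    destruct w; simpl; [apply inbox_upd; auto using inbox_center; lia | apply inbox_center; auto].
Qed.

(* Towards a contradiction, no site of an open slice of [B_b(x)] is reachable from [x]:
   then every slice through a reachable site carries a closed edge. *)
Section NoReachableFrame.
Hypothesis no_frame : ~ exists q, frame x q /\ op_conn x q.

Lemma reachable_closed_edge q k : inbox d b x q -> op_conn x q -> (k < d)%nat ->
  exists e, closed_in x e /\ snd e <> k /\ fst e k = q k.
Proof.
  intros Hq Hconn Hk; apply not_open_slice; intro Hs.
  apply no_frame; exists q; split; [split; eauto | exact Hconn].
Qed.

Lemma half_open_slice_closed_edge p k s c : (k < d)%nat -> inbox d b x p -> op_conn x p ->
  p k = x k -> half_open p k s -> half_lo s k <= c <= half_hi s k ->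
  exists e, closed_in x e /\ snd e <> k /\ fst e k = c.
Proof.
  intros Hk Hp Hconn Hpk Hopen Hc.
  assert (Hq : inbox d b x (upd p k c))
    by (apply inbox_upd; auto; unfold half_lo, half_hi in Hc; destruct s; lia).
  assert (Hq' : op_conn x (upd p k c))
    by (apply rt_trans with p; auto; apply half_open_conn with s; auto; apply Hp).
  destruct (reachable_closed_edge _ k Hq Hq' Hk) as [e He].
  exists e; rewrite upd_eq in He; exact He.
Qed.

(* An open segment of [2 b + 1] sites through [x] meets [2 b + 1] slices, each with a
   closed edge. *)
Lemma segment_not_open k : (k < d)%nat -> half_open x k true -> half_open x k false -> False.
Proof.
  intros Hk Hup Hdown.
  enough (length (seq 0 (2 * b + 1)) <= 3 * d - 1)%nat by (rewrite length_seq in *; lia).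
  apply (few_closed_box_count x (seq 0 (2 * b + 1))
    (fun t e => closed_in x e /\ snd e <> k /\ fst e k = x k - Z.of_nat b + Z.of_nat t));
    auto using seq_NoDup.
  - intros t Ht; apply in_seq in Ht.
    destruct (Z_lt_le_dec (Z.of_nat t) (Z.of_nat b));
      [apply (half_open_slice_closed_edge x k false) |
       apply (half_open_slice_closed_edge x k true)];
      auto using inbox_center; first [apply rt_refl | unfold half_lo, half_hi; lia].
  - intros t t' e _ _ [_ [_ H]] [_ [_ H']]; lia.
  - intros t e _ [H _]; exact H.
Qed.

(* An open half-segment through a reachable [p] meets [b] slices besides that of [x], each
   with a closed edge; a closed half-segment in each direction through [x] gives [d] more. *)
Lemma half_segment_not_open p k0 s0 : (k0 < d)%nat -> inbox d b x p -> op_conn x p ->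
  p k0 = x k0 -> (forall k, (k < d)%nat -> exists s, ~ half_open x k s) -> ~ half_open p k0 s0.
Proof.
  intros Hk0 Hp Hconn Hpk Hclosed Hopen.
  set (signed := fun t : nat => if s0 then Z.of_nat t else - Z.of_nat t).
  set (l := map inl (seq 1 b) ++ map inr (seq 0 d)).
  assert (Hl : forall a, In a l ->
    match a with inl t => (1 <= t <= b)%nat | inr k => (k < d)%nat end).
  { intros a Ha; unfold l in Ha; rewrite in_app_iff, !in_map_iff in Ha.
    destruct Ha as [[t [<- Ht]]|[k [<- Ht]]]; apply in_seq in Ht; lia. }
  enough (length l <= 3 * d - 1)%nat
    by (unfold l in *; rewrite length_app, !length_map, !length_seq in *; lia).
  apply (few_closed_box_count x l (fun a e => match a with
    | inl t => closed_in x e /\ snd e <> k0 /\ fst e k0 = x k0 + signed t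
    | inr k => exists s, half_closed_edge x k s e
    end)); auto.
  - unfold l; apply NoDup_app;
      try (apply NoDup_map_NoDup_ForallPairs;
           [intros ? ? _ _ E; now inversion E | apply seq_NoDup]).
    intros a Ha Ha'; apply in_map_iff in Ha as [? [<- _]]; apply in_map_iff in Ha' as [? [E _]].
    discriminate.
  - intros [t|k] Ha; specialize (Hl _ Ha); simpl in Hl.
    + apply (half_open_slice_closed_edge p k0 s0); auto.
      unfold signed, half_lo, half_hi; destruct s0; lia.
    + destruct (Hclosed k Hl) as [s Hs]; destruct (exists_half_closed_edge x k s Hs); eauto.
  - intros [t|k] [t'|k'] e Ha Ha';
      pose proof (Hl _ Ha) as Hm; pose proof (Hl _ Ha') as Hm'; simpl in Hm, Hm'.
    + intros [_ [_ Ht]] [_ [_ Ht']]; f_equal; unfold signed in *; destruct s0; lia.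
    + intros [_ [Hne Ht]] [s He]; destruct (half_closed_edge_shape _ _ _ _ He) as [Hk [_ Hi]].
      rewrite Hi in Ht by congruence; unfold signed in Ht; destruct s0; lia.
    + intros [s He] [_ [Hne Ht]]; destruct (half_closed_edge_shape _ _ _ _ He) as [Hk [_ Hi]].
      rewrite Hi in Ht by congruence; unfold signed in Ht; destruct s0; lia.
    + intros [s He] [s' He']; apply half_closed_edge_shape in He, He'.
      f_equal; intuition congruence.
  - intros [t|k] e Ha; [intros [H _]; exact H|].
    intros [s He]; apply (half_closed_edge_closed x k s); auto using inbox_center.
    exact (Hl _ Ha).
Qed.

Lemma no_reachable_frame_false j sg : (j < d)%nat -> (sg = 1 \/ sg = -1) ->
  op_conn x (upd x j (x j + sg)) -> False.
Proof.
  intros Hj Hsg Hconn.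
  set (x' := upd x j (x j + sg)) in *.
  assert (Hx' : inbox d b x x') by (apply inbox_upd; auto using inbox_center; lia).
  assert (Hsome : forall k, (k < d)%nat -> exists s, ~ half_open x k s).
  { intros k Hk; apply NNPP; intro Hno.
    apply (segment_not_open k Hk); apply NNPP; intro; apply Hno; eauto. }
  apply (halves_not_all_closed j sg); auto.
  - intros k s Hk; apply half_segment_not_open; auto using inbox_center; apply rt_refl.
  - intros k s Hk Hkj; apply half_segment_not_open; auto.
    unfold x'; rewrite upd_neq; auto.
Qed.

End NoReachableFrame.
End FrameOfSite.

Lemma exists_reachable_frame x : site d x -> few_closed_box x -> ~ isolated x ->
  exists q, frame x q /\ op_conn x q.
Proof.
  intros Hx Hfew Hiso; apply NNPP; intro Hno.
  destruct (exists_open_neighbour x Hx Hiso) as [j [sg [Hj [Hsg Hconn]]]].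
  exact (no_reachable_frame_false x Hx Hfew Hno j sg Hj Hsg Hconn).
Qed.

Lemma non_isolated_conn (M : nat) x y :
  (forall c, inbox d M origin c -> few_closed_box c) ->
  inbox d M origin x -> inbox d M origin y -> ~ isolated x -> ~ isolated y -> op_conn x y.
Proof.
  intros Hfew Hx Hy Hisox Hisoy.
  destruct (exists_reachable_frame x) as [qx [Hqx Hcx]]; auto; [apply Hx|].
  destruct (exists_reachable_frame y) as [qy [Hqy Hcy]]; auto; [apply Hy|].
  apply rt_trans with qx; auto. apply rt_trans with qy; [|now apply op_conn_sym].
  exact (frames_conn M x y qx qy Hfew Hx Hy Hqx Hqy).
Qed.

(* [u k - e_k] is a lower neighbour of [x] or [y] whose [k]-th coordinate differs from
   those of [x] and [y]: the lower one when [|x_k - y_k| <= 1], the upper one otherwise. *)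
Lemma box_around_pair (m : nat) z x y :
  inbox d m origin x -> inbox d m origin y -> inbox d b z x -> inbox d b z y ->
  exists zc (u : nat -> nat -> Z), inbox d (m + b) origin zc /\
    inbox d b zc x /\ inbox d b zc y /\
    forall k, (k < d)%nat -> (u k = x \/ u k = y) /\ u k k - 1 <> x k /\ u k k - 1 <> y k /\
      inbox d b zc (upd (u k) k (u k k - 1)).
Proof.
  intros [Hx Hxm] [Hy Hym] [_ Hxz] [_ Hyz].
  set (lo := fun k => Z.max (Z.max (x k) (y k) - 2 * Z.of_nat b) (Z.min (x k) (y k) - 1)).
  set (zc := fun k => if Nat.ltb k d then lo k + Z.of_nat b else 0).
  set (u := fun k => if Bool.eqb (Z.abs (x k - y k) <=? 1) (x k <=? y k) then x else y).
  assert (Hin : forall p, site d p ->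
    (forall k, (k < d)%nat -> lo k <= p k <= lo k + 2 * Z.of_nat b) -> inbox d b zc p).
  { intros p Hp Hb; split; auto; intros k Hk; specialize (Hb k Hk).
    unfold zc; destruct (Nat.ltb_spec k d); lia. }
  assert (Hlo : forall k, (k < d)%nat -> lo k <= Z.min (x k) (y k) /\
    Z.max (x k) (y k) <= lo k + 2 * Z.of_nat b).
  { intros k Hk; specialize (Hxz k Hk); specialize (Hyz k Hk); unfold lo; lia. }
  exists zc, u; split; [|split; [|split]].
  - split.
    + intros k Hk; unfold zc; destruct (Nat.ltb_spec k d); lia.
    + intros k Hk; specialize (Hxm k Hk); specialize (Hym k Hk); unfold origin in *.
      unfold zc, lo; destruct (Nat.ltb_spec k d); lia.
  - apply Hin; auto; intros k Hk; specialize (Hlo k Hk); lia.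
  - apply Hin; auto; intros k Hk; specialize (Hlo k Hk); lia.
  - intros k Hk.
    assert (Hu : (u k = x \/ u k = y) /\ u k k - 1 <> x k /\ u k k - 1 <> y k /\ lo k <= u k k - 1).
    { specialize (Hlo k Hk); unfold u, lo in *.
      destruct (Z.leb_spec (Z.abs (x k - y k)) 1), (Z.leb_spec (x k) (y k)); cbn [Bool.eqb];
        (split; [tauto | lia]). }
    destruct Hu as [Hux [Hx' [Hy' Hlou]]]; do 3 (split; [assumption|]).
    apply Hin; [apply site_upd; [destruct Hux as [-> | ->]|]; auto|].
    intros k' Hk'; specialize (Hlo k' Hk').
    destruct (Nat.eq_dec k' k) as [->|]; [rewrite upd_eq | rewrite upd_neq by auto];
      destruct Hux as [Hux | Hux]; rewrite Hux in *; lia.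
Qed.

(* Distinct isolated [x], [y] in a common box carry the [3 d] closed edges [(x, k)],
   [(y, k)] and [(u k - e_k, k)]. *)
Lemma isolated_eq (m : nat) z x y :
  (forall c, inbox d (m + b) origin c -> few_closed_box c) ->
  inbox d m origin x -> inbox d m origin y -> inbox d b z x -> inbox d b z y ->
  isolated x -> isolated y -> x = y.
Proof.
  intros Hfew Hxm Hym Hxz Hyz Hisox Hisoy; apply NNPP; intro Hne.
  destruct (box_around_pair m z x y Hxm Hym Hxz Hyz) as [zc [u [Hzc [Hx [Hy Hu]]]]].
  set (edge := fun '(k, i) =>
    (match i with O => x | 1%nat => y | _ => upd (u k) k (u k k - 1) end, k)).
  set (l := list_prod (seq 0 d) (seq 0 3)).
  enough (length l <= 3 * d - 1)%nat by (unfold l in *; rewrite length_prod, !length_seq in *; lia).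
  apply (few_closed_box_count zc l (fun a e => e = edge a)); eauto.
  - apply NoDup_list_prod; apply seq_NoDup.
  - intros [k i] [k' i'] e Hki Hki' -> E.
    unfold l in Hki, Hki'; rewrite in_prod_iff, !in_seq in Hki, Hki'.
    injection E as E <-; destruct (Hu k ltac:(lia)) as [_ [Hux [Huy _]]].
    assert (Ek := f_equal (fun p => p k) E); simpl in Ek.
    destruct i as [|[|[|]]], i' as [|[|[|]]]; try lia; try reflexivity; exfalso;
      rewrite ?upd_eq in Ek; try lia; apply Hne; congruence.
  - intros [k i] e Hki ->; unfold l in Hki; rewrite in_prod_iff, !in_seq in Hki.
    destruct (Hu k ltac:(lia)) as [Hux [_ [_ Hbox]]].
    split; [|split; [unfold edge; simpl; lia|]]; destruct i as [|[|]];
      cbv beta iota delta [edge fst snd]; auto.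
    + apply (Hisox k); lia.
    + apply (Hisoy k); lia.
    + destruct Hux as [-> | ->]; [apply (Hisox k) | apply (Hisoy k)]; lia.
Qed.

End Boxes.

End OpenGraph.

Lemma op_conn_mono d (op op' : (nat -> Z) -> nat -> Prop) x y :
  (forall p k, op p k -> op' p k) -> op_conn d op x y -> op_conn d op' x y.
Proof.
  intro Hmono; induction 1 as [x y [Hx [Hy [j [Hj H]]]]| |];
    [|apply rt_refl | eapply rt_trans; eauto].
  apply rt_step; repeat split; auto; exists j; split; auto.
  destruct H as [[]|[]]; [left|right]; auto.
Qed.

Lemma isolated_anti d (op op' : (nat -> Z) -> nat -> Prop) x :
  (forall p k, op p k -> op' p k) -> isolated d op' x -> isolated d op x.
Proof. intros Hmono Hiso k Hk; destruct (Hiso k Hk); split; auto. Qed.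

Lemma non_isolated_nearby d b (op op' : (nat -> Z) -> nat -> Prop) (m : nat) p :
  (2 <= d)%nat -> (2 * d <= b)%nat ->
  (forall c, inbox d (S m + b) origin c -> few_closed_box d op' b c) ->
  inbox d m origin p -> ~ isolated d op p ->
  exists a, inbox d (S m) origin a /\ ~ isolated d op' a /\ op_conn d op p a.
Proof.
  intros Hd Hb Hfew Hp Hiso.
  destruct (exists_open_neighbour d op p (proj1 Hp) Hiso) as [j [sg [Hj [Hsg Hconn]]]].
  assert (Hp' : inbox d (S m) origin p) by (apply inbox_widen with m; auto).
  assert (Hq : inbox d (S m) origin (upd p j (p j + sg))).
  { apply inbox_upd; auto. pose proof (proj2 Hp j Hj); unfold origin in *; lia. }
  destruct (classic (isolated d op' p)) as [Hisop|Hisop];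
    [|exists p; split; [exact Hp' | split; [exact Hisop | apply rt_refl]]].
  exists (upd p j (p j + sg)); split; [exact Hq | split; [intro Hisoq | exact Hconn]].
  assert (Hpp : inbox d b p p) by (apply inbox_center, Hp).
  assert (E : p = upd p j (p j + sg)).
  { apply (isolated_eq d op' b Hd Hb (S m) p); auto. apply inbox_upd; auto; lia. }
  assert (Ej := f_equal (fun q => q j) E); simpl in Ej; rewrite upd_eq in Ej; lia.
Qed.

Open Scope R_scope.

Section Environment.
Variables (d b : nat) (eps : R) (g : R -> R) (w : Env).
Hypothesis hgdec : forall x y, 0 < x -> x <= y -> g y <= g x.

Lemma open_edge_grow (m n : nat) p k : eps <= 1 -> (1 <= m)%nat -> (m <= n)%nat ->
  open_edge w g eps m p k -> open_edge w g eps n p k.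
Proof.
  unfold open_edge, thr; intros Heps Hm Hmn Hopen.
  enough (g (Rpower (INR n) (1 - eps)) <= g (Rpower (INR m) (1 - eps))) by lra.
  apply hgdec; [apply exp_pos|].
  apply Rle_Rpower_l; [lra | split; [apply lt_0_INR; lia | apply le_INR; lia]].
Qed.

Lemma open_edge_shrink (m n : nat) p k : 1 <= eps -> (1 <= m)%nat -> (m <= n)%nat ->
  open_edge w g eps n p k -> open_edge w g eps m p k.
Proof.
  unfold open_edge, thr; intros Heps Hm Hmn Hopen.
  enough (g (Rpower (INR m) (1 - eps)) <= g (Rpower (INR n) (1 - eps))) by lra.
  apply hgdec; [apply exp_pos|].
  replace (1 - eps) with (- (eps - 1)) by ring; rewrite !Rpower_Ropp.
  apply Rinv_le_contravar; [apply exp_pos|].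
  apply Rle_Rpower_l; [lra | split; [apply lt_0_INR; lia | apply le_INR; lia]].
Qed.

Lemma few_closed_box_of_few_closed (n : nat) z :
  few_closed d b w g eps n z -> few_closed_box d (open_edge w g eps n) b z.
Proof.
  intros Hfew l Hl Hcl; apply Hfew; auto; intros e He.
  destruct (Hcl e He) as [Hin [Hk Hop]]; repeat split; try apply Hin; auto.
  now apply Rnot_lt_le.
Qed.

Lemma inf_cluster_site (n : nat) x : inf_cluster d w g eps n x -> site d x.
Proof. intro H; destruct (H nil) as [y [[Hx _] _]]; exact Hx. Qed.

Lemma inf_cluster_not_isolated (n : nat) x :
  inf_cluster d w g eps n x -> ~ isolated d (open_edge w g eps n) x.
Proof.
  intros Hinf Hiso; destruct (Hinf (x :: nil)) as [y [[_ Hxy] Hy]].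
  apply Hy; left; symmetry; exact (isolated_conn d _ x y Hiso Hxy).
Qed.

Lemma inf_cluster_mono (m n : nat) x :
  (forall p k, open_edge w g eps m p k -> open_edge w g eps n p k) ->
  inf_cluster d w g eps m x -> inf_cluster d w g eps n x.
Proof.
  intros Hmono Hinf l; destruct (Hinf l) as [y [[Hx Hxy] Hy]].
  exists y; repeat split; auto; exact (op_conn_mono d _ _ x y Hmono Hxy).
Qed.

Hypothesis hd : (2 <= d)%nat.
Hypothesis hb : (2 * d <= b)%nat.
Variable N : nat.
Hypothesis henv : forall n : nat, (N <= n)%nat ->
  (forall z, inbox d (n + b) origin z -> few_closed d b w g eps n z) /\
  unique_inf_cluster d w g eps n.

Definition cluster_absorbs (n : nat) : Prop :=
  forall x0, inf_cluster d w g eps n x0 -> forall u, inbox d n origin u ->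
    ~ isolated d (open_edge w g eps n) u -> conn d w g eps n x0 u.

Lemma cluster_absorbs_le1 : eps <= 1 -> exists N', forall n, (N' <= n)%nat -> cluster_absorbs n.
Proof.
  intro Heps.
  destruct (proj2 (henv (S N) ltac:(lia))) as [v [Hv _]].
  destruct (site_bounded d v (inf_cluster_site _ v Hv)) as [R HR].
  exists (S N + R)%nat; intros n Hn x0 Hx0 u Hu Hiso.
  assert (Hgrow : forall p k, open_edge w g eps (S N) p k -> open_edge w g eps n p k)
    by (intros p k; apply open_edge_grow; [exact Heps | lia | lia]).
  destruct (henv n ltac:(lia)) as [Hfew [r [_ Hr]]].
  assert (Hvn : inf_cluster d w g eps n v) by exact (inf_cluster_mono _ _ v Hgrow Hv).
  split; [exact (inf_cluster_site _ x0 Hx0)|].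
  apply rt_trans with r; [apply op_conn_sym, (Hr x0 Hx0)|].
  apply rt_trans with v; [apply (Hr v Hvn)|].
  apply (non_isolated_conn d _ b hd hb (n + b)).
  - intros c Hc; apply few_closed_box_of_few_closed, Hfew, Hc.
  - apply inbox_origin_of_bound with R; auto; [exact (inf_cluster_site _ v Hv) | lia].
  - apply inbox_widen with n; auto; lia.
  - intro Hisov; apply (inf_cluster_not_isolated _ v Hv), (isolated_anti d _ _ v Hgrow Hisov).
  - exact Hiso.
Qed.

Lemma cluster_absorbs_gt1 : 1 < eps -> exists N', forall n, (N' <= n)%nat -> cluster_absorbs n.
Proof.
  intro Heps; exists (S N); intros n Hn x0 Hx0 u Hu Hiso.
  assert (Hx0s := inf_cluster_site _ x0 Hx0).
  destruct (site_bounded d x0 Hx0s) as [R HR].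
  set (n' := S (n + R)).
  assert (Hshrink : forall p k, open_edge w g eps n' p k -> open_edge w g eps n p k)
    by (intros p k; apply open_edge_shrink; [lra | unfold n'; lia..]).
  assert (Hfew : forall c, inbox d (n' + b) origin c -> few_closed_box d (open_edge w g eps n') b c)
    by (intros c Hc; apply few_closed_box_of_few_closed;
        apply (proj1 (henv n' ltac:(unfold n'; lia))), Hc).
  destruct (non_isolated_nearby d b (open_edge w g eps n) (open_edge w g eps n') (n + R) x0)
    as [a [Ha [Hisoa Hxa]]]; auto.
  { apply inbox_origin_of_bound with R; auto; lia. }
  { apply inf_cluster_not_isolated; exact Hx0. }
  destruct (non_isolated_nearby d b (open_edge w g eps n) (open_edge w g eps n') (n + R) u)
    as [c [Hc [Hisoc Huc]]]; auto.
  { apply inbox_widen with n; auto; lia. }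
  split; [exact Hx0s|].
  apply rt_trans with a; auto. apply rt_trans with c; [|now apply op_conn_sym].
  apply (op_conn_mono d _ _ a c Hshrink).
  apply (non_isolated_conn d _ b hd hb (n' + b)); auto; apply inbox_widen with n'; auto; lia.
Qed.

End Environment.

Theorem lemma4p4 (d b : nat) (eps : R) (g : R -> R) (w : Env)
  (hd : (2 <= d)%nat) (hb : (2 * d <= b)%nat) (heps : 0 < eps)
  (hgpos : forall x, 0 < x -> 0 < g x)
  (hgdec : forall x y, 0 < x -> x <= y -> g y <= g x)
  (hglim : forall e, 0 < e -> exists M, forall x, M < x -> g x < e)
  (hwpos : forall x j, site d x -> (j < d)%nat -> 0 < w x j)
  (henv : exists N : nat, forall n : nat, (N <= n)%nat ->
     (forall z, inbox d (n + b) origin z -> few_closed d b w g eps n z) /\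
     unique_inf_cluster d w g eps n) :
  exists N : nat, forall n : nat, (N <= n)%nat ->
    forall x0, inf_cluster d w g eps n x0 ->
      sparse d b (fun x => inbox d n origin x /\ ~ conn d w g eps n x0 x).
Proof.
  destruct henv as [N HN].
  assert (Habs : exists N', forall n, (N' <= n)%nat -> cluster_absorbs d eps g w n).
  { destruct (Rle_lt_dec eps 1).
    - now apply (cluster_absorbs_le1 d b eps g w hgdec hd hb N).
    - now apply (cluster_absorbs_gt1 d b eps g w hgdec hd hb N). }
  destruct Habs as [N' HN']; exists (Nat.max N N').
  intros n Hn x0 Hx0 z x y _ [Hx Hxc] [Hy Hyc] Hxz Hyz.
  apply (isolated_eq d (open_edge w g eps n) b hd hb n z); auto.
  - intros c Hc; apply few_closed_box_of_few_closed, (proj1 (HN n ltac:(lia))), Hc.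
  - apply NNPP; intro Hiso; exact (Hxc (HN' n ltac:(lia) x0 Hx0 x Hx Hiso)).
  - apply NNPP; intro Hiso; exact (Hyc (HN' n ltac:(lia) x0 Hx0 y Hy Hiso)).
Qed.
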